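(* Let $r\geq 5$ be an integer, let $q$ be a primitive $r$-th root of unity and $\beta=2+q+q^{-1}$. Consider the homomorphism from the braid group $B_n$ (generators $g_1,\dots,g_{n-1}$) to the Temperley–Lieb algebra $A_{\beta,n}$ given by $g_i\mapsto (1+q)e_i-1$. (1) If $r\neq 6,10$, then the image of $B_3$ in the $2$-dimensional irreducible representation $M_2(\mathbb C)$ of $A_{\beta,3}$ (composition $B_3\to A_{\beta,3}\to M_2(\mathbb C)$) is infinite. (2) If $r=10$, then the image of $B_4$ in the $3$-dimensional irreducible representation $M_3(\mathbb C)$ of $A_{\beta,4}$ is infinite.
   Context: The Temperley–Lieb algebra $A_{\beta,n}$ is the complex algebra generated by $1,e_1,\dots,e_{n-1}$ with relations $e_ie_{i\pm1}e_i=\beta^{-1}e_i$, $e_ie_j=e_je_i$ for $|i-j|>1$, $e_i^2=e_i$. It is a quotient of the Hecke algebra $H_n(q)$ (generators $g_i$ with braid relations and $g_i^2=(q-1)g_i+q$) via $g_i\mapsto (1+q)e_i-1$. For $\beta\neq 1$, $A_{\beta,3}\cong M_2(\mathbb C)\oplus\mathbb C$, and for $\beta\neq 1,2$, $A_{\beta,4}\cong M_3(\mathbb C)\oplus M_2(\mathbb C)\oplus\mathbb C$ (semisimple); $M_2(\mathbb C)$, resp. $M_3(\mathbb C)$, denotes the corresponding simple factor, i.e. the unique irreducible representation of that dimension. The braid group $B_n$ has generators $g_1,\dots,g_{n-1}$ with $g_ig_{i+1}g_i=g_{i+1}g_ig_{i+1}$ and $g_ig_j=g_jg_i$ for $|i-j|>1$.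 *)

(* Complex numbers are modelled by algC (algebraically closed
   field of characteristic 0, the algebraic complex numbers). *)
From mathcomp Require Import all_boot all_algebra all_field.
Set Implicit Arguments. Unset Strict Implicit. Unset Printing Implicit Defensive.
Import GRing.Theory.
Local Open Scope ring_scope.

(* A d-dimensional (unital) representation of the Temperley-Lieb algebra
   A_{beta,n}: the images E i (i : 'I_n.-1, standing for e_{i+1}) of the
   generators e_1..e_{n-1} in 'M_d satisfy the defining relations
   (1 is sent to the identity matrix). *)
Definition TL_rep (F : fieldType) (beta : F) (n d : nat)
    (E : 'I_n.-1 -> 'M[F]_d) : Prop :=
  (forall i, E i *m E i = E i) /\
  (forall i j : 'I_n.-1, (i : nat) = j.+1 \/ (j : nat) = i.+1 ->
     E i *m E j *m E i = beta^-1 *: E i) /\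
  (forall i j : 'I_n.-1, (j.+1 < i)%N \/ (i.+1 < j)%N ->
     E i *m E j = E j *m E i).

Definition irreducible_family (F : fieldType) (I : Type) (d : nat)
    (E : I -> 'M[F]_d) : Prop :=
  (0 < d)%N /\
  forall U : 'M[F]_d, (forall i, (U *m E i <= U)%MS) ->
    \rank U = 0%N \/ \rank U = d.

(* M lies in the group generated by the matrices G i, i.e. M is a product of
   the G i and their inverses (the image of the braid group, which is
   generated by the g_i, under g_i |-> G i). *)
Definition in_generated_group (F : fieldType) (I : Type) (d : nat)
    (G : I -> 'M[F]_d) (M : 'M[F]_d) : Prop :=
  exists w : seq (I * bool),
    M = foldr (fun x N => (if x.2 then G x.1 else invmx (G x.1)) *m N) 1%:M w.

Definition generated_group_infinite (F : fieldType) (I : Type) (d : nat)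
    (G : I -> 'M[F]_d) : Prop :=
  ~ (exists s : seq 'M[F]_d, forall M, in_generated_group G M -> M \in s).

From mathcomp Require Import all_boot all_algebra all_field.
From mathcomp Require Import all_order lra ring zify.
Import Order.TTheory GRing.Theory Num.Theory.
Set Implicit Arguments. Unset Strict Implicit. Unset Printing Implicit Defensive.
Local Open Scope ring_scope.

(* If the image of the braid group were finite, each of its elements M would
   have finite order, so for every automorphism u of algC the eigenvalues of
   u(M) would be roots of unity and |u(tr M)| <= dim M. In an irreducible
   representation of dimension 2 or 3 every e_i has rank one, hence trace one,
   and the Temperley-Lieb relations give tr(e_i e_j) = beta^-1 for adjacent i, j
   and e_1 e_3 = 0 in dimension 3. Since beta = (1 + q)(1 + q^-1), this yields
   tr(g_1 g_2^-1) = 1 - q - q^-1 and tr(g_1 g_3 g_2^-1) = 2q + q^-1 - 2. A Galois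
   conjugation sending q to a primitive r-th root w with Re w < -1/2 (resp., for
   r = 10, with Re w = (1 - sqrt 5)/4) makes these traces larger than 2 (resp. 3)
   in absolute value. Such a w is obtained from the nontrivial root of unity of
   largest real part, which turns out to be primitive. *)

(** * Finite matrix groups have bounded traces *)

Section GeneratedGroup.
Variables (F : fieldType) (I : Type) (n : nat) (G : I -> 'M[F]_n.+1).

Lemma in_generated_group_mul M1 M2 :
  in_generated_group G M1 -> in_generated_group G M2 ->
  in_generated_group G (M1 *m M2).
Proof.
move=> [w1 ->] [w2 ->]; exists (w1 ++ w2); rewrite foldr_cat.
by elim: w1 => [|x w1 IH] /=; rewrite ?mul1mx // -mulmxA IH.
Qed.

Lemma in_generated_group_exp M k :
  in_generated_group G M -> in_generated_group G (M ^+ k).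
Proof.
move=> GM; elim: k => [|k IH]; first by exists [::].
by rewrite exprS; apply: in_generated_group_mul.
Qed.

End GeneratedGroup.

Lemma expr_collision (R : nzRingType) (x : R) (s : seq R) :
  (forall k, x ^+ k \in s) -> exists i j, (i < j)%N /\ x ^+ i = x ^+ j.
Proof.
move=> xs; pose t := [seq x ^+ k | k <- iota 0 (size s).+1].
have : ~~ uniq t.
  apply/negP => /uniq_leq_size le_ts.
  have : (size t <= size s)%N by apply: le_ts => _ /mapP [k _ ->].
  by rewrite size_map size_iota ltnn.
case/(uniqPn 0) => i [j [lt_ij]]; rewrite size_map size_iota => lt_js.
rewrite !(nth_map 0) ?size_iota ?(ltn_trans lt_ij) //.
by rewrite !nth_iota ?(ltn_trans lt_ij) // !add0n => eq_ij; exists i, j.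
Qed.

Section TraceOfFiniteOrder.
Variables (C : numClosedFieldType) (n : nat).

Lemma mxtrace_eigenvalues (A : 'M[C]_n.+1) :
  exists rs : seq C, [/\ size rs = n.+1, {in rs, forall a, eigenvalue A a}
                       & \tr A = \sum_(a <- rs) a].
Proof.
have [rs def_chA] := closed_field_poly_normal (char_poly A).
rewrite (monicP (char_poly_monic A)) scale1r in def_chA.
have size_rs : size rs = n.+1.
  by have := size_char_poly A; rewrite def_chA size_prod_XsubC => -[].
exists rs; split => // [a a_rs|].
  by rewrite eigenvalue_root_char def_chA root_prod_XsubC.
apply: oppr_inj; rewrite -char_poly_trace // def_chA.
by rewrite -coefPn_prod_XsubC size_rs.
Qed.

Lemma eigenvalue_norm_le1 (A : 'M[C]_n.+1) i j a :
  (i < j)%N -> A ^+ i = A ^+ j -> eigenvalue A a -> `|a| <= 1.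
Proof.
move=> lt_ij Aij /eigenvalueP [v vA nz_v].
have vAk k : v *m A ^+ k = a ^+ k *: v.
  elim: k => [|k IH]; first by rewrite expr0 mulmx1 scale1r.
  by rewrite exprSr mulmxA IH -scalemxAl vA scalerA exprSr.
have /eqP : a ^+ i *: v = a ^+ j *: v by rewrite -!vAk Aij.
rewrite -subr_eq0 -scalerBl scaler_eq0 (negbTE nz_v) orbF subr_eq0.
have [-> | nz_a] := eqVneq a 0; first by rewrite normr0 ler01.
rewrite -(subnKC (ltnW lt_ij)) exprD -{1}[a ^+ i]mulr1 => /eqP /mulfI.
move=> /(_ (expf_neq0 i nz_a)) /(congr1 (fun x => `|x|)) /esym /eqP.
by rewrite normr1 normrX pexpr_eq1 ?subn_gt0 // => /eqP ->.
Qed.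

Lemma norm_mxtrace_le (A : 'M[C]_n.+1) i j :
  (i < j)%N -> A ^+ i = A ^+ j -> `|\tr A| <= n.+1%:R.
Proof.
move=> lt_ij Aij; have [rs [size_rs rsA ->]] := mxtrace_eigenvalues A.
apply: le_trans (ler_norm_sum _ _ _) _.
rewrite -size_rs -sum1_size natr_sum big_seq [leRHS]big_seq.
by apply: ler_sum => a /rsA; apply: eigenvalue_norm_le1 lt_ij Aij.
Qed.

End TraceOfFiniteOrder.

Lemma generated_group_infinite_of_trace (C : numClosedFieldType) (I : Type)
    n (G : I -> 'M[C]_n.+1) (u : {rmorphism C -> C}) M :
  in_generated_group G M -> n.+1%:R < `|u (\tr M)| ->
  generated_group_infinite G.
Proof.
move=> GM tr_gt [s Gs].
have GMk k := Gs _ (in_generated_group_exp k GM).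
have [i [j [lt_ij Mij]]] := expr_collision GMk.
have uMij : (map_mx u M) ^+ i = (map_mx u M) ^+ j by rewrite -!rmorphXn Mij.
by have := norm_mxtrace_le lt_ij uMij; rewrite trace_map_mx (lt_geF tr_gt).
Qed.

(** * Temperley-Lieb representations of small dimension *)

Lemma idem_mulmx_swap (F : fieldType) d k (C : 'M[F]_(d, k)) (R : 'M[F]_(k, d)) :
  row_full C -> row_free R -> C *m R *m (C *m R) = C *m R -> R *m C = 1%:M.
Proof.
move=> /row_fullP [B BC] /row_freeP [B' RB'] /(congr1 (fun M => B *m M *m B')).
by rewrite /= !mulmxA BC mul1mx -!mulmxA RB' mulmx1.
Qed.

Lemma mxtrace_idem (F : fieldType) d (A : 'M[F]_d) :
  A *m A = A -> \tr A = (\rank A)%:R.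
Proof.
move=> AA; have RC : row_base A *m col_base A = 1%:M.
  by apply: idem_mulmx_swap; rewrite ?col_base_full ?row_base_free ?mulmx_base.
by rewrite -{1}(mulmx_base A) mxtrace_mulC RC mxtrace1.
Qed.

Section Sandwich.
Variables (F : fieldType) (d : nat) (b : F) (E0 E1 : 'M[F]_d).
Hypothesis E0E1E0 : E0 *m E1 *m E0 = b^-1 *: E0.

Lemma mxrank_sandwich : b != 0 -> (\rank E0 <= \rank E1)%N.
Proof.
move=> nz_b; have -> : E0 = (b *: E0) *m E1 *m E0.
  by rewrite -!scalemxAl E0E1E0 scalerA mulfV // scale1r.
exact: leq_trans (mxrankM_maxl _ _) (mxrankM_maxr _ _).
Qed.

Lemma mxrank_add_sandwich :
  b != 1 -> E0 *m E0 = E0 -> E1 *m E1 = E1 -> (\rank E0 + \rank E1 <= d)%N.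
Proof.
move=> b_neq1 E0E0 E1E1; set K := (E0 :&: E1)%MS.
have fixK (E : 'M_d) : E *m E = E -> (K <= E)%MS -> K *m E = K.
  by move=> EE /submxP [D ->]; rewrite -mulmxA EE.
have K0 : K *m E0 = K by apply: fixK => //; apply: capmxSl.
have K1 : K *m E1 = K by apply: fixK => //; apply: capmxSr.
have : K = b^-1 *: K.
  by rewrite -{1}K0 -{1}K1 -{1}K0 -!mulmxA [E0 *m _]mulmxA E0E1E0 -scalemxAr K0.
move/eqP; rewrite -subr_eq0 -{1}[K]scale1r -scalerBl scaler_eq0 subr_eq0.
rewrite eq_sym invr_eq1 (negbTE b_neq1) /= => /eqP K_eq0.
by rewrite -mxrank_sum_cap -/K K_eq0 mxrank0 addn0 rank_leq_col.
Qed.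

Lemma mxtrace_sandwich : E0 *m E0 = E0 -> \tr (E0 *m E1) = b^-1 * \tr E0.
Proof. by move=> E0E0; rewrite -{1}E0E0 -mulmxA mxtrace_mulC E0E1E0 mxtraceZ. Qed.

End Sandwich.

Lemma irreducible_family_nonzero (F : fieldType) (I : Type) d (E : I -> 'M[F]_d) :
  (1 < d)%N -> irreducible_family E -> ~ (forall i, E i = 0).
Proof.
move=> d_gt1 [_ irrE] E0.
have stable i : ((pid_mx 1 : 'M_d) *m E i <= (pid_mx 1 : 'M_d))%MS.
  by rewrite E0 mulmx0 sub0mx.
case: (irrE _ stable); rewrite rank_pid_mx ?(ltnW d_gt1) // => d1.
by rewrite -d1 in d_gt1.
Qed.

Section TemperleyLiebRepresentation.
Variables (F : fieldType) (b : F) (n d : nat) (E : 'I_n.-1 -> 'M[F]_d).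
Hypothesis TL : TL_rep b E.

Lemma TL_rep_sandwich (i j : 'I_n.-1) :
  (i : nat) = j.+1 \/ (j : nat) = i.+1 -> E i *m E j *m E i = b^-1 *: E i.
Proof. by case: TL => _ [+ _]; apply. Qed.

Lemma TL_rep_mxrank_eq : b != 0 -> forall i j, \rank (E i) = \rank (E j).
Proof.
move=> nz_b.
have adj (i j : 'I_n.-1) : (j : nat) = i.+1 -> \rank (E i) = \rank (E j).
  move=> ji; apply/eqP; rewrite eqn_leq.
  by rewrite !(mxrank_sandwich (TL_rep_sandwich _)) //; [left | right].
suff up (i j : 'I_n.-1) : (i <= j)%N -> \rank (E i) = \rank (E j).
  by move=> i j; case: (leqP i j) => [/up // | /ltnW /up ->].
move=> le_ij; move: (j - i)%N (subnKC le_ij) => k.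
elim: k j {le_ij} => [|k IH] j def_j.
  by congr (\rank (E _)); apply: val_inj; rewrite /= -def_j addn0.
have lt_ik : (i + k < n.-1)%N by rewrite (leq_trans _ (ltn_ord j)) // -def_j addnS.
by rewrite (IH (Ordinal lt_ik)) //; apply: adj; rewrite /= -def_j addnS.
Qed.

Lemma TL_rep_idem i : E i *m E i = E i.
Proof. by case: TL. Qed.

Lemma TL_rep_mxrank1 : b != 0 -> b != 1 -> (2 < n)%N -> (1 < d <= 3)%N ->
  irreducible_family E -> forall i, \rank (E i) = 1%N.
Proof.
move=> nz_b b_neq1 n_gt2 /andP [d_gt1 d_le3] irrE i.
have lt0 : (0 < n.-1)%N by lia.
have lt1 : (1 < n.-1)%N by lia.
have rkE := TL_rep_mxrank_eq nz_b.
have E010 := @TL_rep_sandwich (Ordinal lt0) (Ordinal lt1) (or_intror erefl).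
have := mxrank_add_sandwich E010 b_neq1 (TL_rep_idem _) (TL_rep_idem _).
rewrite !(rkE _ i) => le_d.
suff : \rank (E i) != 0%N by lia.
apply/eqP => rk0; apply: (irreducible_family_nonzero d_gt1 irrE) => j.
by apply/eqP; rewrite -mxrank_eq0 (rkE j i) rk0.
Qed.

Lemma TL_rep_mxtrace1 : b != 0 -> b != 1 -> (2 < n)%N -> (1 < d <= 3)%N ->
  irreducible_family E -> forall i, \tr (E i) = 1.
Proof.
move=> nz_b b_neq1 n_gt2 d_bd irrE i.
by rewrite mxtrace_idem ?TL_rep_idem ?TL_rep_mxrank1.
Qed.

End TemperleyLiebRepresentation.

Lemma TL4_rep_mul_far_eq0 (F : fieldType) (b : F) (E : 'I_(4.-1) -> 'M[F]_3) :
  b != 0 -> b != 1 -> TL_rep b E -> irreducible_family E ->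
  E ord0 *m E ord_max = 0.
Proof.
move=> nz_b b_neq1 TL irrE; have [_ [_ commE]] := TL.
have ord3P (i : 'I_(4.-1)) : [\/ i = ord0, i = inord 1 | i = ord_max].
  by case: i => [[|[|[|//]]] ?]; [constructor 1 | constructor 2 | constructor 3];
     apply/val_inj; rewrite /= ?inordK.
set E0 := E ord0; set E1 := E (inord 1); set E2 := E ord_max.
have E010 : E0 *m E1 *m E0 = b^-1 *: E0.
  by apply: (TL_rep_sandwich TL); right; rewrite inordK.
have E212 : E2 *m E1 *m E2 = b^-1 *: E2.
  by apply: (TL_rep_sandwich TL); left; rewrite inordK.
have E02 : E0 *m E2 = E2 *m E0 by apply: commE; right.
set P := E0 *m E2; set U := (P + P *m E1)%MS.
have PE0 : P *m E0 = P by rewrite /P -mulmxA -E02 mulmxA (TL_rep_idem TL).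
have PE2 : P *m E2 = P by rewrite /P -mulmxA (TL_rep_idem TL).
have PE10 : P *m E1 *m E0 = b^-1 *: P.
  by rewrite /P E02 -!mulmxA [E0 *m (E1 *m E0)]mulmxA E010 -scalemxAr.
have PE11 : P *m E1 *m E1 = P *m E1 by rewrite -mulmxA (TL_rep_idem TL).
have PE12 : P *m E1 *m E2 = b^-1 *: P.
  by rewrite /P -!mulmxA [E2 *m (E1 *m E2)]mulmxA E212 -scalemxAr.
have stableU i : (U *m E i <= U)%MS.
  rewrite addsmxMr addsmx_sub.
  have [->|->|->] := ord3P i.
  - by rewrite -/E0 PE0 PE10 addsmxSl scalemx_sub ?addsmxSl.
  - by rewrite -/E1 PE11 addsmxSr.
  - by rewrite -/E2 PE2 PE12 addsmxSl scalemx_sub ?addsmxSl.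
have rkP : (\rank P <= 1)%N.
  have rkE := TL_rep_mxrank1 TL nz_b b_neq1 isT isT irrE.
  by rewrite (leq_trans (mxrankM_maxl _ _)) // rkE.
have rkU : (\rank U <= 2)%N.
  apply: leq_trans (mxrank_adds_leqif P (P *m E1)).1 _.
  by have := leq_trans (mxrankM_maxl P E1) rkP; lia.
have [U0 | rkU3] := irrE.2 U stableU; last by rewrite rkU3 in rkU.
apply/eqP; rewrite -submx0 (submx_trans (addsmxSl P (P *m E1))) //.
by rewrite -/U submx0 -mxrank_eq0 U0.
Qed.

Section BraidGenerators.
Variables (F : fieldType) (d : nat).
Implicit Types (a c b : F) (E : 'M[F]_d).

Lemma invmx_scale_idem_sub1 a c E :
  E *m E = E -> a * c = a + c -> invmx (a *: E - 1%:M) = c *: E - 1%:M.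
Proof.
move=> EE ac; set A := a *: E - 1%:M; set B := c *: E - 1%:M.
have AB : A *m B = 1%:M.
  have ac0 : a * c - a - c = 0 by rewrite ac; ring.
  rewrite /A /B mulmxBl !mulmxBr !mul1mx mulmx1 -scalemxAl -scalemxAr EE scalerA.
  by rewrite opprB addrA addrAC -!scalerBl ac0 scale0r add0r.
have [uA _] := mulmx1_unit AB.
by rewrite -[B]mul1mx -(mulVmx uA) -mulmxA AB mulmx1.
Qed.

Lemma mxtrace_scale_idem_sub1_mul2 a c b (E0 E1 : 'M[F]_d) :
  E0 *m E0 = E0 -> E0 *m E1 *m E0 = b^-1 *: E0 -> \tr E0 = 1 -> \tr E1 = 1 ->
  \tr ((a *: E0 - 1%:M) *m (c *: E1 - 1%:M)) = a * c / b - a - c + d%:R.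
Proof.
move=> E00 E010 tr0 tr1.
rewrite mulmxBl !mulmxBr !mul1mx !mulmx1 -scalemxAl -scalemxAr scalerA.
rewrite !raddfB /= !mxtraceZ (mxtrace_sandwich E010 E00) tr0 tr1 mxtrace1.
by ring.
Qed.

Lemma mxtrace_scale_idem_sub1_mul3 a c b (E0 E1 E2 : 'M[F]_d) :
  E0 *m E0 = E0 -> E2 *m E2 = E2 -> E0 *m E1 *m E0 = b^-1 *: E0 ->
  E2 *m E1 *m E2 = b^-1 *: E2 -> E0 *m E2 = 0 ->
  \tr E0 = 1 -> \tr E1 = 1 -> \tr E2 = 1 ->
  \tr ((a *: E0 - 1%:M) *m (a *: E2 - 1%:M) *m (c *: E1 - 1%:M)) =
    2 * a + c - 2 * (a * c / b) - d%:R.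
Proof.
move=> E00 E22 E010 E212 E02 tr0 tr1 tr2.
have -> : (a *: E0 - 1%:M) *m (a *: E2 - 1%:M) = 1%:M - a *: E0 - a *: E2.
  rewrite mulmxBl !mulmxBr !mul1mx !mulmx1 -scalemxAl -scalemxAr E02 !scaler0.
  by rewrite sub0r opprB addrCA addrA.
rewrite !mulmxBl mul1mx -!scalemxAl !mulmxBr !mulmx1 -!scalemxAr.
rewrite !raddfB /= !mxtraceZ (mxtrace_sandwich E010 E00) (mxtrace_sandwich E212 E22).
by rewrite tr0 tr1 tr2 mxtrace1; ring.
Qed.

End BraidGenerators.

(** * Real parts of roots of unity *)

Section UnitCircle.
Variable C : numClosedFieldType.
Implicit Types (y z : C).

Lemma norm_eq1_of_expr_eq1 n z : (0 < n)%N -> z ^+ n = 1 -> `|z| = 1.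
Proof.
by move=> n_gt0 zn; apply/eqP; rewrite -(pexpr_eq1 n_gt0) ?normr_ge0 // -normrX zn normr1.
Qed.

Lemma norm1_neq0 z : `|z| = 1 -> z != 0.
Proof. by move=> z1; rewrite -normr_eq0 z1 oner_neq0. Qed.

Lemma conjC_norm1 z : `|z| = 1 -> z^* = z^-1.
Proof. by move=> z1; rewrite invC_norm z1 expr1n invr1 mul1r. Qed.

Lemma ReE_norm1 z : `|z| = 1 -> 'Re z = (z + z^-1) / 2.
Proof. by move=> z1; rewrite ReE conjC_norm1. Qed.

End UnitCircle.

(* Real parts are taken in the real closed field [algR], so that [lra] and [nra]
   apply; as its order is that of [algC] on representatives, bounds proved in
   [algR] are bounds in [algC]. *)
Definition ReR (z : algC) : algR := in_algR (algCreal_Re z).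

Ltac algR_of_algC h := apply: val_inj;
  rewrite ?(rmorphD, rmorphB, rmorphN, rmorphM, rmorph1, rmorph_nat, rmorphXn, rmorph0);
  exact: h.

Section RealPart.
Implicit Types (y z : algC).

Lemma ReR1 : ReR 1 = 1.
Proof. by apply: val_inj; rewrite rmorph1 /= (Creal_ReP _ (rpred1 _)). Qed.

Lemma ReRN z : ReR (- z) = - ReR z.
Proof. have h : 'Re (- z) = - 'Re z by rewrite raddfN. algR_of_algC h. Qed.

Lemma ReR_bound z : `|z| = 1 -> -1 <= ReR z <= 1.
Proof.
move=> z1; have h : 'Re z ^+ 2 + 'Im z ^+ 2 = 1 by rewrite -normC2_Re_Im z1 expr1n.
have hR : ReR z ^+ 2 + (in_algR (algCreal_Im z)) ^+ 2 = 1 by algR_of_algC h.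
by apply/andP; split; nra.
Qed.

Lemma ReR_lt1 z : `|z| = 1 -> z != 1 -> ReR z < 1.
Proof.
move=> z1 z_neq1.
have h : 1 - 'Re z = `|z - 1| ^+ 2 / 2.
  rewrite normCK rmorphB /= conjC1 conjC_norm1 // ReE_norm1 //; field.
  by rewrite norm1_neq0.
have : 0 < 1 - 'Re z by rewrite h divr_gt0 // exprn_gt0 // normr_gt0 subr_eq0.
by rewrite subr_gt0.
Qed.

Lemma ReR_mul_add_div y z : `|y| = 1 -> `|z| = 1 ->
  ReR (y * z) + ReR (y / z) = 2 * ReR y * ReR z.
Proof.
move=> y1 z1; have h : 'Re (y * z) + 'Re (y / z) = 2 * 'Re y * 'Re z.
  have yz1 : `|y * z| = 1 by rewrite normrM y1 z1 mulr1.
  have yVz1 : `|y / z| = 1 by rewrite normrM normfV y1 z1 invr1 mulr1.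
  by rewrite !ReE_norm1 //; field; rewrite !norm1_neq0.
algR_of_algC h.
Qed.

Lemma ReR_mul_mul_div y z : `|y| = 1 -> `|z| = 1 ->
  ReR (y * z) * ReR (y / z) = ReR y ^+ 2 + ReR z ^+ 2 - 1.
Proof.
move=> y1 z1; have h : 'Re (y * z) * 'Re (y / z) = 'Re y ^+ 2 + 'Re z ^+ 2 - 1.
  have yz1 : `|y * z| = 1 by rewrite normrM y1 z1 mulr1.
  have yVz1 : `|y / z| = 1 by rewrite normrM normfV y1 z1 invr1 mulr1.
  by rewrite !ReE_norm1 //; field; rewrite !norm1_neq0.
algR_of_algC h.
Qed.

Lemma ReR_sqr z : `|z| = 1 -> ReR (z ^+ 2) = 2 * ReR z ^+ 2 - 1.
Proof.
move=> z1; have h : 'Re (z ^+ 2) = 2 * 'Re z ^+ 2 - 1.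
  by rewrite !ReE_norm1 ?normrX ?z1 ?expr1n //; field; rewrite norm1_neq0.
algR_of_algC h.
Qed.

Lemma ReR_cube z : `|z| = 1 -> ReR (z ^+ 3) = 4 * ReR z ^+ 3 - 3 * ReR z.
Proof.
move=> z1; have h : 'Re (z ^+ 3) = 4 * 'Re z ^+ 3 - 3 * 'Re z.
  by rewrite !ReE_norm1 ?normrX ?z1 ?expr1n //; field; rewrite norm1_neq0.
algR_of_algC h.
Qed.

End RealPart.

Section UnityRoots.
Variable R : idomainType.
Implicit Types (x z : R).

Lemma prim_root_expr_neq1 n z k : n.-primitive_root z -> (0 < k < n)%N -> z ^+ k != 1.
Proof.
move=> prim_z /andP [k_gt0 lt_kn]; rewrite -(prim_order_dvd prim_z).
by apply/negP => /(dvdn_leq k_gt0); rewrite leqNgt lt_kn.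
Qed.

Lemma sum_expr_unity_root n x : x ^+ n = 1 -> x != 1 -> \sum_(k < n) x ^+ k = 0.
Proof.
move=> xn x_neq1; have /esym/eqP := subrX1 x n.
by rewrite xn subrr mulf_eq0 subr_eq0 (negbTE x_neq1) => /eqP.
Qed.

Lemma prim_root_of_expr n z j :
  (0 < n)%N -> z ^+ n = 1 -> n.-primitive_root (z ^+ j) -> n.-primitive_root z.
Proof.
move=> n_gt0 zn prim_zj; have [m prim_z m_dvd_n] := prim_order_exists n_gt0 zn.
suff -> : n = m by [].
apply/eqP; rewrite eqn_dvd m_dvd_n (prim_order_dvd prim_zj).
by rewrite exprAC (prim_expr_order prim_z) expr1n eqxx.
Qed.

Lemma prim_root_expr_half m z : (0 < m)%N -> (m * 2).-primitive_root z -> z ^+ m = -1.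
Proof.
move=> m_gt0 prim_z; have /eqP := prim_expr_order prim_z.
rewrite exprM sqrf_eq1 (negbTE (prim_root_expr_neq1 prim_z _)) ?orFb => [/eqP //|].
by lia.
Qed.

End UnityRoots.

Definition maxRe_root n (z : algC) :=
  [/\ z ^+ n = 1, z != 1 & forall y, y ^+ n = 1 -> y != 1 -> ReR y <= ReR z].

Section MaxRealPartRoot.
Variables (n : nat) (q : algC).
Hypothesis prim_q : n.-primitive_root q.

Let n_gt0 : (0 < n)%N := prim_order_gt0 prim_q.

Let unity_q k : (q ^+ k) ^+ n = 1.
Proof. by rewrite exprAC (prim_expr_order prim_q) expr1n. Qed.

Let norm_q k : `|q ^+ k| = 1.
Proof. exact: norm_eq1_of_expr_eq1 n_gt0 (unity_q k). Qed.

Lemma maxRe_root_exists : (1 < n)%N -> exists z, maxRe_root n z.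
Proof.
move=> n_gt1.
have [k k_gt0 max_k] := @arg_maxP _ _ _ (Ordinal n_gt1) [pred k : 'I_n | (0 < k)%N]
  (fun k => ReR (q ^+ k)) isT.
exists (q ^+ k); split=> [||y yn y_neq1]; first exact: unity_q.
  by rewrite (prim_root_expr_neq1 prim_q) // (k_gt0 : (0 < k)%N) ltn_ord.
have [i def_y] := prim_rootP prim_q yn; rewrite def_y in y_neq1 *; apply: max_k.
by rewrite inE lt0n; apply: contraNneq y_neq1 => ->.
Qed.

Lemma maxRe_root_gt_Nhalf z : (4 <= n)%N -> maxRe_root n z -> -1/2 < ReR z.
Proof.
move=> n_ge4 [_ _ max_z]; rewrite ltNge; apply/negP => le_z.
have q_neq1 : q != 1 by rewrite -[q]expr1 (prim_root_expr_neq1 prim_q) //; lia.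
have : \sum_(k < n) ReR (q ^+ k) = 0.
  apply: val_inj; rewrite rmorph_sum rmorph0 /=.
  by rewrite -raddf_sum sum_expr_unity_root ?(prim_expr_order prim_q) ?raddf0.
rewrite -(big_mkord xpredT (fun k => ReR (q ^+ k))) big_ltn; last lia.
rewrite expr0 ReR1 => sum0.
have : \sum_(1 <= k < n) ReR (q ^+ k) <= \sum_(1 <= k < n) (-1/2 : algR).
  apply: ler_sum_nat => k k_bd; apply: le_trans le_z.
  by apply: max_z; rewrite ?unity_q ?(prim_root_expr_neq1 prim_q).
rewrite sumr_const_nat -mulr_natr => le_sum.
have : (3 : algR) <= (n - 1)%:R by rewrite (ler_nat _ 3); lia.
lra.
Qed.

(* For unit complex numbers u and z, A = Re (u z) and B = Re (u / z) satisfy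
   A + B = 2 U Z and A B = U ^ 2 + Z ^ 2 - 1, where U = Re u and Z = Re z. *)
Lemma maxRe_coset_contra (U Z A B : algR) : -1/2 < Z -> Z < 1 -> A <= U -> B <= U ->
  U <= Z -> A + B = 2 * U * Z -> A * B = U ^+ 2 + Z ^+ 2 - 1 -> False.
Proof. by move=> *; nra. Qed.

Lemma maxRe_root_prim z : maxRe_root n z -> -1/2 < ReR z -> n.-primitive_root z.
Proof.
move=> [zn z_neq1 max_z] z_gt; have nz_z := norm_eq1_of_expr_eq1 n_gt0 zn.
have n_gt1 : (1 < n)%N.
  rewrite ltn_neqAle n_gt0 andbT; apply: contraNneq z_neq1 => n1.
  by rewrite -zn -n1 expr1.
pose in_z y := [exists j : 'I_n, y == z ^+ j].
have in_zP j : in_z (z ^+ j).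
  by apply/existsP; exists (Ordinal (ltn_pmod j n_gt0)); rewrite /= expr_mod.
have [/existsP [j /eqP qz] | qNz] := boolP (in_z q).
  by apply: (prim_root_of_expr (j := j) n_gt0 zn); rewrite -qz.
have [k + max_k] := @arg_maxP _ _ _ (Ordinal n_gt1) [pred k : 'I_n | ~~ in_z (q ^+ k)]
  (fun k => ReR (q ^+ k)) qNz.
rewrite inE => kNz.
set u := q ^+ k in kNz max_k.
have max_u y : y ^+ n = 1 -> ~~ in_z y -> ReR y <= ReR u.
  by move=> yn; have [i ->] := prim_rootP prim_q yn; move=> iNz; apply: max_k.
have z0 := norm1_neq0 nz_z.
have uzNz : ~~ in_z (u * z).
  apply: contra kNz => /existsP [j /eqP uzj].
  suff -> : u = z ^+ (j + n.-1) by [].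
  by apply: (mulIf z0); rewrite -exprSr -addnS prednK // exprD zn mulr1 uzj.
have uVzNz : ~~ in_z (u / z).
  apply: contra kNz => /existsP [j /eqP uzj].
  by suff -> : u = z ^+ j.+1 by []; rewrite exprSr -uzj divfK.
have u_neq1 : u != 1 by apply: contraNneq kNz => ->; rewrite -(expr0 z).
exfalso; apply: (maxRe_coset_contra z_gt (ReR_lt1 nz_z z_neq1)
  (max_u _ _ uzNz) (max_u _ _ uVzNz) (max_z u (unity_q k) u_neq1)
  (ReR_mul_add_div (norm_q k) nz_z) (ReR_mul_mul_div (norm_q k) nz_z)).
  by rewrite exprMn unity_q zn mulr1.
by rewrite exprMn exprVn unity_q zn invr1 mulr1.
Qed.

(* [Q4 s] is nonpositive for -1 <= s <= 1/2 and [Q4 1 = 18]; written in [y] with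
   [s = (y + y^-1)/2] it is a Laurent polynomial of degree 4 with constant term 3,
   so its sum over the n-th roots of unity is [3 n] as soon as n > 4. *)
Definition Q4 (R : pzRingType) (s : R) := (2 * s - 1) * (2 * s + 1) ^+ 2 * (s + 1).

Lemma sum_Q4_ReR : (4 < n)%N -> \sum_(k < n) Q4 (ReR (q ^+ k)) = 3 * n%:R.
Proof.
move=> n_gt4.
have sum0 m : (0 < m < n)%N -> \sum_(k < n) (q ^+ m) ^+ k = 0 /\
                              \sum_(k < n) ((q ^+ m)^-1) ^+ k = 0.
  move=> m_bd; have qm1 := prim_root_expr_neq1 prim_q m_bd.
  by rewrite !sum_expr_unity_root ?exprVn ?unity_q ?invr1 ?invr_eq1.
apply: val_inj; rewrite rmorph_sum rmorphM !rmorph_nat.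
transitivity (\sum_(k < n) ((q ^+ 4) ^+ k + 3 * (q ^+ 3) ^+ k + 5 * (q ^+ 2) ^+ k
   + 6 * (q ^+ 1) ^+ k + 6 + 6 * ((q ^+ 1)^-1) ^+ k + 5 * ((q ^+ 2)^-1) ^+ k
   + 3 * ((q ^+ 3)^-1) ^+ k + ((q ^+ 4)^-1) ^+ k) / 2).
  apply: eq_bigr => k _.
  rewrite /Q4 !(rmorphM, rmorphB, rmorphD, rmorphXn, rmorph1, rmorph_nat) /=.
  rewrite ReE_norm1 //.
  rewrite !exprVn !(exprAC q _ k).
  by field; rewrite norm1_neq0.
rewrite -mulr_suml !big_split /= -!mulr_sumr.
have [s1 s1'] := sum0 1%N ltac:(lia); have [s2 s2'] := sum0 2%N ltac:(lia).
have [s3 s3'] := sum0 3%N ltac:(lia); have [s4 s4'] := sum0 4%N ltac:(lia).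
by rewrite s1 s1' s2 s2' s3 s3' s4 s4' sumr_const card_ord; field.
Qed.

Lemma maxRe_root_gt_half z : (7 <= n)%N -> maxRe_root n z -> 1/2 < ReR z.
Proof.
move=> n_ge7 [_ _ max_z]; rewrite ltNge; apply/negP => le_z.
have Q4_le0 k : (0 < k < n)%N -> Q4 (ReR (q ^+ k)) <= 0.
  move=> k_bd; have k_neq1 := prim_root_expr_neq1 prim_q k_bd.
  have le_half := le_trans (max_z _ (unity_q k) k_neq1) le_z.
  have /andP [ge_N1 _] := ReR_bound (norm_q k).
  by rewrite /Q4 mulr_le0_ge0 ?mulr_le0_ge0 ?sqr_ge0 //; lra.
have := sum_Q4_ReR (leq_trans (isT : (4 < 7)%N) n_ge7).
rewrite -(big_mkord xpredT (fun k => Q4 (ReR (q ^+ k)))) big_ltn; last lia.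
have : \sum_(1 <= k < n) Q4 (ReR (q ^+ k)) <= 0.
  by rewrite big_nat sumr_le0 // => k; apply: Q4_le0.
have : (7 : algR) <= n%:R by rewrite (ler_nat _ 7).
rewrite expr0 ReR1 /Q4; nra.
Qed.

End MaxRealPartRoot.

Lemma prim_root_maxRe_exists n (q : algC) : (4 <= n)%N -> n.-primitive_root q ->
  exists z, [/\ n.-primitive_root z, maxRe_root n z & -1/2 < ReR z].
Proof.
move=> n_ge4 prim_q; have [|z max_z] := maxRe_root_exists prim_q; first lia.
have z_gt := maxRe_root_gt_Nhalf prim_q n_ge4 max_z.
have prim_z := maxRe_root_prim prim_q max_z z_gt.
by exists z.
Qed.

Lemma prim_root_ReR_gt_half n (q : algC) : (7 <= n)%N -> n.-primitive_root q ->
  exists z, n.-primitive_root z /\ 1/2 < ReR z.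
Proof.
move=> n_ge7 prim_q.
have [|z [prim_z max_z _]] := prim_root_maxRe_exists _ prim_q; first lia.
have z_gt := maxRe_root_gt_half prim_q n_ge7 max_z.
by exists z.
Qed.

(* The square root [z ^+ h] of the root [z] of maximal real part is again
   primitive, and [Re z = 2 (Re z^h)^2 - 1] with [Re z^h <= Re z] forces
   [Re z^h < -1/2]. *)
Lemma odd_prim_root_ReR_lt_Nhalf n (q : algC) :
  odd n -> (5 <= n)%N -> n.-primitive_root q ->
  exists w, n.-primitive_root w /\ ReR w < -1/2.
Proof.
move=> odd_n n_ge5 prim_q.
have [|z [prim_z [zn z_neq1 max_z] z_gt]] := prim_root_maxRe_exists _ prim_q; first lia.
have n_gt0 := prim_order_gt0 prim_q; have z1 := norm_eq1_of_expr_eq1 n_gt0 zn.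
set h := (n.+1 %/ 2)%N.
have h2 : (h * 2 = n.+1)%N by rewrite /h divnK // dvdn2 /= odd_n.
have w2 : (z ^+ h) ^+ 2 = z by rewrite -exprM h2 exprS zn mulr1.
have w_neq1 : z ^+ h != 1 by apply: contraNneq z_neq1 => w1; rewrite -w2 w1 expr1n.
have le_w : ReR (z ^+ h) <= ReR z by rewrite max_z // exprAC zn expr1n.
have w1 : `|z ^+ h| = 1 by rewrite normrX z1 expr1n.
have := ReR_sqr w1; rewrite w2 => z_sqr.
exists (z ^+ h); split; last by have := ReR_lt1 z1 z_neq1; nra.
rewrite prim_root_exp_coprime // /coprime -dvdn1.
rewrite -(dvdn_addr 1 (dvdn_gcdr h n)) addn1 -h2.
exact: dvdn_mulr (dvdn_gcdl _ _).
Qed.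

Lemma opp_prim_root_expr m (q : algC) j : (m * 2).-primitive_root q ->
  coprime j m -> odd (j + m) -> (m * 2).-primitive_root (- q ^+ j).
Proof.
move=> prim_q co_jm odd_jm.
have m_gt0 : (0 < m)%N by have := prim_order_gt0 prim_q; lia.
rewrite -mulN1r -(prim_root_expr_half m_gt0 prim_q) -exprD addnC prim_root_exp_coprime //.
by rewrite coprimeMr coprimen2 odd_jm andbT coprime_sym /coprime gcdnDr gcdnC.
Qed.

Lemma prim_root_ReR_lt_Nhalf r (q : algC) : (5 <= r)%N -> r <> 6%N -> r <> 10%N ->
  r.-primitive_root q -> exists w, r.-primitive_root w /\ ReR w < -1/2.
Proof.
move=> r_ge5 r_neq6 r_neq10 prim_q.
have [odd_r | even_r] := boolP (odd r).
  exact (odd_prim_root_ReR_lt_Nhalf odd_r r_ge5 prim_q).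
have [m def_r] : exists m, r = (m * 2)%N by exists r./2; lia.
subst r.
suff [j [co_jm odd_jm Re_gt]] :
    exists j, [/\ coprime j m, odd (j + m) & 1/2 < ReR (q ^+ j)].
  by exists (- q ^+ j); rewrite opp_prim_root_expr // ReRN; split=> //; lra.
have [odd_m | even_m] := boolP (odd m).
  have prim_q2 : m.-primitive_root (q ^+ 2).
    by have := exp_prim_root prim_q 2; rewrite gcdnMl mulnK.
  have [|z [prim_z Re_gt]] := prim_root_ReR_gt_half _ prim_q2; first lia.
  have [i def_z] := prim_rootP prim_q2 (prim_expr_order prim_z).
  exists (2 * i)%N; rewrite exprM -def_z oddD oddM odd_m coprimeMl coprime2n odd_m.
  by rewrite -(prim_root_exp_coprime i prim_q2) -def_z.
have [|z [prim_z Re_gt]] := prim_root_ReR_gt_half _ prim_q; first lia.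
have [j def_z] := prim_rootP prim_q (prim_expr_order prim_z).
have := prim_root_exp_coprime j prim_q; rewrite -def_z prim_z coprimeMr coprimen2.
by case/esym/andP=> co_jm odd_j; exists j; rewrite oddD odd_j (negbTE even_m) -def_z.
Qed.

Lemma prim_root10_ReR (z : algC) : 10.-primitive_root z -> 4 * ReR z ^+ 2 = 2 * ReR z + 1.
Proof.
move=> prim_z; have z5 : z ^+ 5 = -1 by apply: (@prim_root_expr_half _ 5).
have z1 := norm_eq1_of_expr_eq1 (isT : (0 < 10)%N) (prim_expr_order prim_z).
have z0 := norm1_neq0 z1.
have z_neqN1 : z + 1 != 0.
  rewrite addr_eq0; apply: contra_neq (prim_root_expr_neq1 prim_z (isT : (0 < 2 < 10)%N)).
  by move=> ->; rewrite sqrrN expr1n.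
have phi_z : z ^+ 4 - z ^+ 3 + z ^+ 2 - z + 1 = 0.
  have : (z + 1) * (z ^+ 4 - z ^+ 3 + z ^+ 2 - z + 1) = 0.
    have -> : (z + 1) * (z ^+ 4 - z ^+ 3 + z ^+ 2 - z + 1) = z ^+ 5 + 1 by ring.
    by rewrite z5 addNr.
  by move/eqP; rewrite mulf_eq0 (negbTE z_neqN1) => /eqP.
have h : 4 * 'Re z ^+ 2 = 2 * 'Re z + 1.
  apply/eqP; rewrite -subr_eq0 ReE_norm1 //.
  have -> : 4 * ((z + z^-1) / 2) ^+ 2 - (2 * ((z + z^-1) / 2) + 1) =
     (z ^+ 2)^-1 * (z ^+ 4 - z ^+ 3 + z ^+ 2 - z + 1) by field.
  by rewrite phi_z mulr0.
algR_of_algC h.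
Qed.

Lemma prim_root10_ReR_neg (q : algC) : 10.-primitive_root q ->
  exists w, [/\ 10.-primitive_root w, 4 * ReR w ^+ 2 = 2 * ReR w + 1 & ReR w < 0].
Proof.
move=> prim_q; have Re_q := prim_root10_ReR prim_q.
have [Re_neg | Re_ge0] := ltP (ReR q) 0; first by exists q.
have prim_q3 : 10.-primitive_root (q ^+ 3) by rewrite prim_root_exp_coprime.
exists (q ^+ 3); split=> //; first exact: prim_root10_ReR.
rewrite ReR_cube ?(norm_eq1_of_expr_eq1 (isT : (0 < 10)%N) (prim_expr_order prim_q)) //.
nra.
Qed.

Lemma norm_1_sub_gt2 (w : algC) : `|w| = 1 -> ReR w < -1/2 -> 2 < `|1 - w - w^-1|.
Proof.
move=> w1 Re_lt.
have -> : 1 - w - w^-1 = algRval (1 - 2 * ReR w).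
  by rewrite [RHS]/= ReE_norm1 //; field; rewrite norm1_neq0.
have pos : (0 : algR) <= 1 - 2 * ReR w by lra.
by rewrite ger0_norm //; have : (2 : algR) < 1 - 2 * ReR w by lra.
Qed.

Lemma norm_2_sub_gt3 (w : algC) : `|w| = 1 -> 4 * ReR w ^+ 2 = 2 * ReR w + 1 ->
  ReR w < 0 -> 3 < `|2 * w + w^-1 - 2|.
Proof.
move=> w1 Re_sqr Re_neg.
have h : `|2 * w + w^-1 - 2| ^+ 2 = 5 + 8 * 'Re w ^+ 2 - 12 * 'Re w.
  rewrite -(conjC_norm1 w1) normCK !rmorphB !rmorphD !rmorphM /= !rmorph_nat conjCK.
  by rewrite conjC_norm1 // ReE_norm1 //; field; rewrite norm1_neq0.
pose nx : algR := in_algR (normr_real (2 * w + w^-1 - 2)).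
have hR : nx ^+ 2 = 5 + 8 * ReR w ^+ 2 - 12 * ReR w by algR_of_algC h.
have nx_ge0 : 0 <= nx := normr_ge0 (2 * w + w^-1 - 2).
have Re_lt : ReR w < -1/4 by nra.
have nx2_gt : 9 < nx ^+ 2 by rewrite hR; nra.
by have : (3 : algR) < nx by nra.
Qed.

(** * Traces in the image of the braid group *)

Section BraidImage.
Variables (F : fieldType) (q : F).
Hypotheses (q_neq0 : q != 0) (q2_neq1 : q ^+ 2 != 1) (q3_neq1 : q ^+ 3 != 1).

Let a_neq0 : 1 + q != 0.
Proof.
apply: contraNneq q2_neq1 => /eqP; rewrite addrC addr_eq0 => /eqP ->.
by rewrite sqrrN expr1n.
Qed.

Let beta_ac : 2 + q + q^-1 = (1 + q) * (1 + q^-1).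
Proof. by field. Qed.

Let ac_a_c : (1 + q) * (1 + q^-1) = (1 + q) + (1 + q^-1).
Proof. by field. Qed.

Lemma TL_param_neq0 : 2 + q + q^-1 != 0.
Proof.
rewrite beta_ac mulf_neq0 // (_ : 1 + q^-1 = (1 + q) / q) ?mulf_neq0 ?invr_eq0 //.
by field.
Qed.

Lemma TL_param_neq1 : 2 + q + q^-1 != 1.
Proof.
apply: contraNneq q3_neq1 => b1; rewrite -subr_eq0.
have -> : q ^+ 3 - 1 = (2 + q + q^-1 - 1) * q * (q - 1) by field.
by rewrite b1 subrr !mul0r.
Qed.

Lemma TL3_braid_mxtrace (E : 'I_(3.-1) -> 'M[F]_2) :
  TL_rep (2 + q + q^-1) E -> irreducible_family E ->
  \tr (((1 + q) *: E ord0 - 1%:M) *m invmx ((1 + q) *: E ord_max - 1%:M)) =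
    1 - q - q^-1.
Proof.
move=> TL irrE; have tr1 := TL_rep_mxtrace1 TL TL_param_neq0 TL_param_neq1 isT isT irrE.
have E010 : E ord0 *m E ord_max *m E ord0 = (2 + q + q^-1)^-1 *: E ord0.
  by apply: (TL_rep_sandwich TL); right.
rewrite (invmx_scale_idem_sub1 (TL_rep_idem TL _) ac_a_c).
rewrite (mxtrace_scale_idem_sub1_mul2 _ _ (TL_rep_idem TL _) E010 (tr1 _) (tr1 _)).
by rewrite -beta_ac (mulfV TL_param_neq0); ring.
Qed.

Lemma TL4_braid_mxtrace (E : 'I_(4.-1) -> 'M[F]_3) :
  TL_rep (2 + q + q^-1) E -> irreducible_family E ->
  \tr (((1 + q) *: E ord0 - 1%:M) *m ((1 + q) *: E ord_max - 1%:M) *m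
       invmx ((1 + q) *: E (inord 1) - 1%:M)) = 2 * q + q^-1 - 2.
Proof.
move=> TL irrE; have tr1 := TL_rep_mxtrace1 TL TL_param_neq0 TL_param_neq1 isT isT irrE.
have E010 : E ord0 *m E (inord 1) *m E ord0 = (2 + q + q^-1)^-1 *: E ord0.
  by apply: (TL_rep_sandwich TL); right; rewrite inordK.
have E212 : E ord_max *m E (inord 1) *m E ord_max = (2 + q + q^-1)^-1 *: E ord_max.
  by apply: (TL_rep_sandwich TL); left; rewrite inordK.
have E02 := TL4_rep_mul_far_eq0 TL_param_neq0 TL_param_neq1 TL irrE.
rewrite (invmx_scale_idem_sub1 (TL_rep_idem TL _) ac_a_c).
rewrite (mxtrace_scale_idem_sub1_mul3 _ _ (TL_rep_idem TL _) (TL_rep_idem TL _)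
  E010 E212 E02 (tr1 _) (tr1 _) (tr1 _)).
by rewrite -beta_ac (mulfV TL_param_neq0); ring.
Qed.

End BraidImage.

Lemma prim_root_aut_exists n (q w : algC) :
  n.-primitive_root q -> n.-primitive_root w ->
  exists u : {rmorphism algC -> algC}, u q = w.
Proof.
move=> prim_q prim_w; have [i def_w] := prim_rootP prim_q (prim_expr_order prim_w).
have co_i : coprime i n by rewrite -(prim_root_exp_coprime i prim_q) -def_w.
have [u uE] := Qn_aut_exists co_i.
by exists u; rewrite uE ?(prim_expr_order prim_q) // def_w.
Qed.

Theorem proposition3p3 (r : nat) (q : algC) :
  (5 <= r)%N -> r.-primitive_root q ->
  ((r <> 6%N /\ r <> 10%N) ->
     forall E : 'I_(3.-1) -> 'M[algC]_2,
       TL_rep (2 + q + q^-1) E -> irreducible_family E ->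
       generated_group_infinite (fun i => (1 + q) *: E i - 1%:M)) /\
  (r = 10%N ->
     forall E : 'I_(4.-1) -> 'M[algC]_3,
       TL_rep (2 + q + q^-1) E -> irreducible_family E ->
       generated_group_infinite (fun i => (1 + q) *: E i - 1%:M)).
Proof.
move=> r_ge5 prim_q; have r_gt0 : (0 < r)%N by lia.
have q_neq0 : q != 0 by rewrite (prim_root_eq0 prim_q) -lt0n.
have q2_neq1 : q ^+ 2 != 1 by apply: (prim_root_expr_neq1 prim_q); lia.
have q3_neq1 : q ^+ 3 != 1 by apply: (prim_root_expr_neq1 prim_q); lia.
split=> [[r_neq6 r_neq10] | r10] E TL irrE.
  have [w [prim_w Re_w]] := prim_root_ReR_lt_Nhalf r_ge5 r_neq6 r_neq10 prim_q.
  have [u uq] := prim_root_aut_exists prim_q prim_w.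
  apply: (generated_group_infinite_of_trace (u := u)
    (M := ((1 + q) *: E ord0 - 1%:M) *m invmx ((1 + q) *: E ord_max - 1%:M))).
    by exists [:: (ord0, true); (ord_max, false)]; rewrite /= mulmx1.
  rewrite TL3_braid_mxtrace // !rmorphB rmorph1 fmorphV uq.
  exact: norm_1_sub_gt2 (norm_eq1_of_expr_eq1 r_gt0 (prim_expr_order prim_w)) Re_w.
subst r; have [w [prim_w Re_w Re_neg]] := prim_root10_ReR_neg prim_q.
have [u uq] := prim_root_aut_exists prim_q prim_w.
apply: (generated_group_infinite_of_trace (u := u)
  (M := ((1 + q) *: E ord0 - 1%:M) *m ((1 + q) *: E ord_max - 1%:M) *m
        invmx ((1 + q) *: E (inord 1) - 1%:M))).
  exists [:: (ord0, true); (ord_max, true); (inord 1, false)].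
  by rewrite /= mulmx1 mulmxA.
rewrite TL4_braid_mxtrace // rmorphB rmorphD rmorphM rmorph_nat fmorphV uq.
exact: norm_2_sub_gt3 (norm_eq1_of_expr_eq1 r_gt0 (prim_expr_order prim_w)) Re_w Re_neg.
Qed.
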